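(* Consider the following conjunctive hierarchical secret sharing scheme. Setting. Let $\mathcal{P}=\{1,\dots,n\}$ be partitioned into consecutive blocks $\mathcal{P}_\ell=\{N_{\ell-1}+1,\dots,N_\ell\}$, $\ell\in[m]$, where $N_0=0$ and $N_\ell=\sum_{w=1}^{\ell}|\mathcal{P}_w|$, so $\bigcup_{w=1}^{\ell}\mathcal{P}_w=[N_\ell]$. Let $1\le t_1<\dots<t_m$ with $t_\ell\le N_\ell$. The access structure is $\Gamma=\{\mathcal{A}\subseteq\mathcal{P}: |\mathcal{A}\cap(\bigcup_{w=1}^{\ell}\mathcal{P}_w)|\ge t_\ell\text{ for all }\ell\in[m]\}$. Public parameters. A prime $m_0$ and integers $m_1,\dots,m_n$ with $\gcd(m_i,m_j)=1$ for $0\le i<j\le n$, $m_0<m_1<\dots<m_n$, and $km_0<m_i<km_0+m_0^{\theta}$ for all $i\in[n]$, for some reals $k\ge1$, $\theta\in(0,1)$; distinct public functions $h_1,\dots,h_m$ with $h_\ell(x,\ell)\in\mathbb{Z}_{m_i}$ for $x\in\mathbb{Z}_{m_i}$. Share generation. For a secret $s\in\mathbb{Z}_{m_0}$ the dealer chooses $\delta_1,\dots,\delta_{m-1}\in\mathbb{Z}_{m_0}$, sets $\delta_m=(s-\delta_1-\dots-\delta_{m-1})\bmod m_0$, and chooses integers $\alpha_\ell$ with $0\le y_\ell:=\delta_\ell+\alpha_\ell m_0<\prod_{i=1}^{t_\ell}m_i$ for $\ell\in[m]$. It chooses $c_i\in\mathbb{Z}_{m_i}$ for $i\in[N_{m-1}]$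 and gives participant $i$ the share $s_i=c_i$ if $i\in[N_{m-1}]$ and $s_i=y_m\bmod m_i$ if $i\in\{N_{m-1}+1,\dots,N_m\}$. For every $i\in[N_{m-1}]$, with $\ell_1\in[m-1]$ such that $i\in\mathcal{P}_{\ell_1}$, it publishes $w_i^{(\ell)}=(y_\ell-h_\ell(s_i,\ell))\bmod m_i$ for all $\ell\in\{\ell_1,\dots,m\}$. Reconstruction. For $\mathcal{A}\in\Gamma$ and each $\ell\in[m]$, with $\mathcal{A}^{(\ell)}=\mathcal{A}\cap[N_\ell]$, compute for $i\in\mathcal{A}^{(\ell)}$: $s_i^{(\ell)}=h_\ell(s_i,\ell)+w_i^{(\ell)}$ if $\ell\le m-1$, or if $\ell=m$ and $i\le N_{m-1}$; $s_i^{(m)}=s_i$ if $i>N_{m-1}$. Compute $Y_\ell=\left(\sum_{i\in\mathcal{A}^{(\ell)}}\lambda_iM_is_i^{(\ell)}\right)\bmod M$ where $M=\prod_{i\in\mathcal{A}^{(\ell)}}m_i$, $M_i=M/m_i$, $\lambda_i\equiv M_i^{-1}\pmod{m_i}$, and output $(\sum_{\ell=1}^{m}(Y_\ell\bmod m_0))\bmod m_0$. Claim. For every secret $s\in\mathbb{Z}_{m_0}$, every admissible choice of the $\delta_\ell,\alpha_\ell,c_i$, and every $\mathcal{A}\in\Gamma$, one has $Y_\ell=y_\ell$ and $Y_\ell\bmod m_0=\delta_\ell$ for every $\ell\in[m]$, and the reconstruction outputs $s$.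
   Context: $\mathbb{Z}_q=\{0,\dots,q-1\}$, $x\bmod q$ is the least nonnegative residue, $[n]=\{1,\dots,n\}$. The functions $h_\ell$ are intended to be one-way functions; no property beyond being fixed public maps is used. *)

From Stdlib Require Reals.
From mathcomp Require Import all_boot all_order all_algebra.
Set Implicit Arguments. Unset Strict Implicit. Unset Printing Implicit Defensive.
Import Order.TTheory GRing.Theory Num.Theory.

Definition crt_size_bound (m0 mi : nat) (k theta : Rdefinitions.R) : Prop :=
  Rdefinitions.Rlt (Rdefinitions.Rmult k (Raxioms.INR m0)) (Raxioms.INR mi) /\
  Rdefinitions.Rlt (Raxioms.INR mi)
    (Rdefinitions.Rplus (Rdefinitions.Rmult k (Raxioms.INR m0))
                        (Rpower.Rpower (Raxioms.INR m0) theta)).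

Local Open Scope ring_scope.

Definition yval (m0 : nat) (delta alpha : nat -> int) (l : nat) : int :=
  delta l + alpha l * m0%:Z.

Definition share (md N : nat -> nat) (m : nat) (delta alpha : nat -> int)
    (c : nat -> nat) (i : nat) : int :=
  if (i <= N m.-1)%N then (c i)%:Z
  else (yval (md 0%N) delta alpha m %% (md i)%:Z)%Z.

Definition pubw (md N : nat -> nat) (m : nat) (delta alpha : nat -> int)
    (c : nat -> nat) (h : nat -> int -> nat -> int) (i l : nat) : int :=
  ((yval (md 0%N) delta alpha l - h l (share md N m delta alpha c i) l)
     %% (md i)%:Z)%Z.

Definition sl (md N : nat -> nat) (m : nat) (delta alpha : nat -> int)
    (c : nat -> nat) (h : nat -> int -> nat -> int) (i l : nat) : int :=
  if (l <= m.-1)%N || (i <= N m.-1)%N then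
    h l (share md N m delta alpha c i) l + pubw md N m delta alpha c h i l
  else share md N m delta alpha c i.

Definition bigM (md N : nat -> nat) (A : pred nat) (l : nat) : nat :=
  (\prod_(1 <= i < (N l).+1 | A i) md i)%N.

Definition Yval (md N : nat -> nat) (m : nat) (delta alpha : nat -> int)
    (c : nat -> nat) (h : nat -> int -> nat -> int) (A : pred nat)
    (lam : nat -> nat -> int) (l : nat) : int :=
  ((\sum_(1 <= i < (N l).+1 | A i)
      lam l i * ((bigM md N A l %/ md i)%N)%:Z * sl md N m delta alpha c h i l)
    %% (bigM md N A l)%:Z)%Z.

Definition output (md N : nat -> nat) (m : nat) (delta alpha : nat -> int)
    (c : nat -> nat) (h : nat -> int -> nat -> int) (A : pred nat)
    (lam : nat -> nat -> int) : int :=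
  ((\sum_(1 <= l < m.+1)
      (Yval md N m delta alpha c h A lam l %% (md 0%N)%:Z)%Z)
    %% (md 0%N)%:Z)%Z.

From Stdlib Require Reals.
From mathcomp Require Import all_boot all_order all_algebra.
Import Order.TTheory GRing.Theory Num.Theory.
From mathcomp Require Import zify ring.
Local Open Scope ring_scope.

(* Each s_i^(l) with i in A^(l) is congruent to y_l modulo m_i: the public
   w_i^(l) is exactly the correction taking h_l(s_i, l) to y_l mod m_i, and a
   last-level share is y_m mod m_i itself.  So the CRT combination Y_l is y_l
   reduced modulo M = prod_(i in A^(l)) m_i.  As A is authorized, A^(l) has at
   least t_l members, and since the moduli increase, M >= m_1 ... m_(t_l) > y_l;
   hence Y_l = y_l.  Reducing modulo m_0 gives delta_l, and the delta_l add up
   to s modulo m_0. *)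

Section ChineseRemainder.
Variables (I : eqType) (md : I -> nat).

Lemma coprime_prod (a : nat) (r : seq I) :
  {in r, forall j, coprime a (md j)} -> coprime a (\prod_(j <- r) md j).
Proof.
move=> cop_a; rewrite big_seq.
by apply: (big_ind (coprime a)) => [|u v|//]; rewrite ?coprimen1 ?coprimeMr => // -> ->.
Qed.

Lemma chinese_remainder_prod (r : seq I) (x y : int) :
  uniq r -> {in r &, forall i j, i != j -> coprime (md i) (md j)} ->
  (x == y %[mod (\prod_(i <- r) md i)%N])%Z = all (fun i => x == y %[mod md i])%Z r.
Proof.
elim: r => [|a r IH]; first by rewrite big_nil !modz1.
rewrite cons_uniq => /andP[a_r r_uniq] cop.
have cop_a_r : coprime (md a) (\prod_(j <- r) md j).
  apply: coprime_prod => j j_r; apply: cop; rewrite ?mem_head ?inE ?j_r ?orbT //.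
  by apply: contraNneq a_r => ->.
rewrite big_cons PoszM zchinese_remainder // IH // => i j i_r j_r.
by apply: cop; rewrite inE ?i_r ?j_r orbT.
Qed.

Lemma dvdn_prod_div (r : seq I) (i j : I) :
  uniq r -> i \in r -> j \in r -> i != j -> (0 < md i)%N ->
  (md j %| (\prod_(k <- r) md k) %/ md i)%N.
Proof.
move=> r_uniq i_r j_r ij md_i_gt0.
rewrite (bigD1_seq i) //= mulKn // -big_filter (bigD1_seq j) ?dvdn_mulr //.
  by rewrite mem_filter eq_sym ij.
exact: filter_uniq.
Qed.

Lemma crt_combination_mod (r : seq I) (lam s : I -> int) (y : int) :
  let M := (\prod_(i <- r) md i)%N in
  uniq r -> {in r &, forall i j, i != j -> coprime (md i) (md j)} ->
  {in r, forall i, lam i * (M %/ md i)%:Z == 1 %[mod md i]}%Z ->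
  {in r, forall i, s i == y %[mod md i]}%Z ->
  0 <= y < M%:Z ->
  ((\sum_(i <- r) lam i * (M %/ md i)%:Z * s i) %% M%:Z)%Z = y.
Proof.
move=> M r_uniq cop lam_inv s_y y_range.
have md_gt0 i : i \in r -> (0 < md i)%N.
  move=> i_r; rewrite lt0n; apply: contraTneq y_range => md_i0.
  have : (md i %| M)%N by rewrite /M (bigD1_seq i) //= dvdn_mulr.
  by rewrite md_i0 dvd0n => /eqP ->; case: leP.
rewrite -(modz_small y_range); apply/eqP.
rewrite chinese_remainder_prod //; apply/allP => j j_r.
rewrite (bigD1_seq j) //= eqz_mod_dvd addrAC.
have -> : lam j * (M %/ md j)%:Z * s j - y = (lam j * (M %/ md j)%:Z - 1) * s j + (s j - y).
  by ring.
apply: rpredD; first by rewrite rpredD ?dvdz_mulr -?eqz_mod_dvd ?lam_inv ?s_y.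
rewrite big_seq_cond rpred_sum // => i /andP[i_r ij].
by rewrite dvdz_mulr // dvdz_mull // dvdzE /= dvdn_prod_div // md_gt0.
Qed.

End ChineseRemainder.

Lemma prod_iota_le_sorted (f : nat -> nat) (a b : nat) (r : seq nat) :
  {in [pred i | (i <= b)%N] &, {homo f : i j / (i <= j)%N}} ->
  sorted ltn r -> all [pred i | (a <= i <= b)%N] r ->
  (\prod_(a <= i < a + size r) f i <= \prod_(i <- r) f i)%N.
Proof.
move=> f_mono; elim: r a => [|x r IH] a /= r_sorted; first by rewrite addn0 big_geq ?big_nil.
case/andP=> /andP[a_x x_b] r_range.
rewrite big_ltn ?addnS ?ltnS ?leq_addr // -addSn big_cons.
rewrite leq_mul ?f_mono ?inE ?(leq_trans a_x) //.
apply: IH; first exact: path_sorted r_sorted.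
apply/allP => i i_r; have /andP[_ i_b] := allP r_range i i_r.
have x_lt_i : (x < i)%N.
  by move: r_sorted; rewrite (path_sortedE ltn_trans) => /andP[/allP->].
by rewrite inE i_b andbT (leq_ltn_trans a_x).
Qed.

Section Reconstruction.
Context {n m : nat} {N md : nat -> nat} {h : nat -> int -> nat -> int}
  {delta alpha : nat -> int} {c : nat -> nat} {A : pred nat}
  {lam : nat -> nat -> int}.

Local Notation y := (yval (md 0%N) delta alpha).
Local Notation s_ l i := (sl md N m delta alpha c h i l).

Lemma sl_eqmod (l i : nat) : (l <= m)%N -> (s_ l i == y l %[mod md i])%Z.
Proof.
move=> l_le_m; rewrite /sl; case: ifP => [_|/norP[l_gt i_gt]].
  by rewrite /pubw modzDmr addrC subrK.
have -> : l = m by lia.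
by rewrite /share (negbTE i_gt) modz_mod.
Qed.

Definition A_upto (l : nat) : seq nat := [seq i <- iota 1 (N l) | A i].

Lemma mem_A_upto (l i : nat) : (i \in A_upto l) = (1 <= i <= N l)%N && A i.
Proof. by rewrite mem_filter mem_iota andbC add1n ltnS. Qed.

Lemma bigM_A_upto (l : nat) : bigM md N A l = (\prod_(i <- A_upto l) md i)%N.
Proof. by rewrite /bigM -big_filter /index_iota subn1. Qed.

Lemma Yval_A_upto (l : nat) :
  Yval md N m delta alpha c h A lam l =
  ((\sum_(i <- A_upto l) lam l i * (bigM md N A l %/ md i)%:Z * s_ l i)
     %% (bigM md N A l)%:Z)%Z.
Proof. by rewrite /Yval -big_filter /index_iota subn1. Qed.

Hypothesis A_range : forall i, A i -> (1 <= i <= n)%N.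
Hypothesis md_coprime : forall i j, (i < j <= n)%N -> coprime (md i) (md j).

Lemma A_upto_coprime (l : nat) :
  {in A_upto l &, forall i j, i != j -> coprime (md i) (md j)}.
Proof.
move=> i j; rewrite !mem_A_upto => /andP[_ /A_range i_range] /andP[_ /A_range j_range].
case: ltngtP => // [i_lt_j|j_lt_i] _; first by apply: md_coprime; lia.
by rewrite coprime_sym; apply: md_coprime; lia.
Qed.

Lemma Yval_yval (l : nat) : (l <= m)%N ->
  (forall i, (1 <= i <= N l)%N -> A i ->
     (lam l i * (bigM md N A l %/ md i)%:Z == 1 %[mod md i])%Z) ->
  0 <= y l < (bigM md N A l)%:Z ->
  Yval md N m delta alpha c h A lam l = y l.
Proof.
move=> l_le_m lam_inv; rewrite Yval_A_upto; move: lam_inv; rewrite bigM_A_upto => lam_inv.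
apply: crt_combination_mod; first exact/filter_uniq/iota_uniq.
- exact: A_upto_coprime.
- by move=> i; rewrite mem_A_upto => /andP[]; apply: lam_inv.
- by move=> i _; apply: sl_eqmod.
Qed.

Hypothesis md_mono : {in [pred i | (i <= n)%N] &, {homo md : i j / (i <= j)%N}}.
Hypothesis md0_gt0 : (0 < md 0)%N.

Lemma prod_le_bigM (l k : nat) : (k <= count A (iota 1 (N l)))%N ->
  (\prod_(1 <= i < k.+1) md i <= bigM md N A l)%N.
Proof.
rewrite -size_filter -/(A_upto l) bigM_A_upto => k_le.
rewrite -(cat_take_drop k (A_upto l)) big_cat /=.
apply: leq_trans (leq_pmulr _ _); last first.
  rewrite big_seq prodn_cond_gt0 // => i /mem_drop; rewrite mem_A_upto.
  move=> /andP[_ /A_range i_range].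
  by rewrite (leq_trans md0_gt0) // md_mono ?inE //; lia.
rewrite -{1}(size_takel k_le) -add1n.
apply: prod_iota_le_sorted; first exact: md_mono.
  exact/take_sorted/sorted_filter/iota_ltn_sorted/ltn_trans.
apply/allP => i /mem_take; rewrite mem_A_upto => /andP[_ /A_range].
by rewrite inE.
Qed.

End Reconstruction.

Theorem mainTheorem4
  (n m : nat) (N t md : nat -> nat) (h : nat -> int -> nat -> int)
  (s : nat) (delta alpha : nat -> int) (c : nat -> nat)
  (A : pred nat) (lam : nat -> nat -> int)
  (* partition of [n] into nonempty consecutive blocks P_l = {N_{l-1}+1..N_l} *)
  (Hm : (1 <= m)%N)
  (HN0 : N 0%N = 0%N)
  (HNinc : forall l, (1 <= l <= m)%N -> (N l.-1 < N l)%N)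
  (HNm : N m = n)
  (* thresholds *)
  (Ht1 : (1 <= t 1%N)%N)
  (Htinc : forall l, (1 <= l < m)%N -> (t l < t l.+1)%N)
  (HtN : forall l, (1 <= l <= m)%N -> (t l <= N l)%N)
  (* moduli *)
  (Hprime : prime (md 0%N))
  (Hcop : forall i j, (i < j <= n)%N -> coprime (md i) (md j))
  (Hinc : forall i, (i < n)%N -> (md i < md i.+1)%N)
  (Hsize : exists k theta : Rdefinitions.R,
      Rdefinitions.Rle (Raxioms.INR 1) k /\
      Rdefinitions.Rlt (Raxioms.INR 0) theta /\
      Rdefinitions.Rlt theta (Raxioms.INR 1) /\
      forall i, (1 <= i <= n)%N -> crt_size_bound (md 0%N) (md i) k theta)
  (* public functions h_l(x, l) *)
  (Hh : forall l i (x : int), (1 <= l <= m)%N -> (1 <= i <= n)%N ->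
      0 <= x < (md i)%:Z -> 0 <= h l x l < (md i)%:Z)
  (Hhdist : forall l1 l2, (1 <= l1 <= m)%N -> (1 <= l2 <= m)%N ->
      l1 <> l2 -> h l1 <> h l2)
  (* secret and dealer choices *)
  (Hs : (s < md 0%N)%N)
  (Hdelta : forall l, (1 <= l < m)%N -> 0 <= delta l < (md 0%N)%:Z)
  (Hdeltam : delta m =
      ((s%:Z - \sum_(1 <= l < m) delta l) %% (md 0%N)%:Z)%Z)
  (Hy : forall l, (1 <= l <= m)%N ->
      0 <= yval (md 0%N) delta alpha l < (\prod_(1 <= i < (t l).+1) md i)%N%:Z)
  (Hc : forall i, (1 <= i <= N m.-1)%N -> (c i < md i)%N)
  (* authorized set A in Gamma *)
  (HA : forall i, A i -> (1 <= i <= n)%N)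
  (HAgam : forall l, (1 <= l <= m)%N -> (t l <= count A (iota 1 (N l)))%N)
  (* lambda_i = M_i^{-1} mod m_i *)
  (Hlam : forall l i, (1 <= l <= m)%N -> (1 <= i <= N l)%N -> A i ->
      (lam l i * ((bigM md N A l %/ md i)%N)%:Z == 1 %[mod (md i)%:Z])%Z) :
  (forall l, (1 <= l <= m)%N ->
     Yval md N m delta alpha c h A lam l = yval (md 0%N) delta alpha l /\
     (Yval md N m delta alpha c h A lam l %% (md 0%N)%:Z)%Z = delta l) /\
  output md N m delta alpha c h A lam = s%:Z.
Proof.
have md_mono : {in [pred i | (i <= n)%N] &, {homo md : i j / (i <= j)%N}}.
  apply: homo_leq_in => //; first exact: leq_trans.
    by move=> i j _; rewrite !inE => j_le k k_between; rewrite inE; lia.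
  by move=> i; rewrite !inE => _ /Hinc/ltnW.
have md0_gt0 : (0 < md 0)%N by rewrite prime_gt0.
have Y_y l : (1 <= l <= m)%N ->
    Yval md N m delta alpha c h A lam l = yval (md 0%N) delta alpha l.
  move=> l_range; have /andP[y_ge0 y_lt] := Hy l l_range.
  apply: (Yval_yval HA Hcop); first by case/andP: l_range.
    by move=> i; apply: Hlam.
  by rewrite y_ge0 (lt_le_trans y_lt) // lez_nat (prod_le_bigM HA md_mono md0_gt0) ?HAgam.
have delta_range l : (1 <= l <= m)%N -> 0 <= delta l < (md 0%N)%:Z.
  move=> /andP[l_gt0 l_le_m]; case: ltngtP l_le_m => [l_lt_m _|//|-> _].
    by apply: Hdelta; rewrite l_gt0 l_lt_m.
  have md0_pos : 0 < (md 0%N)%:Z by rewrite ltz_nat.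
  by rewrite Hdeltam modz_ge0 ?ltz_pmod ?gt_eqF.
have Y_delta l : (1 <= l <= m)%N ->
    (Yval md N m delta alpha c h A lam l %% (md 0%N)%:Z)%Z = delta l.
  by move=> l_range; rewrite Y_y // /yval addrC modzMDl modz_small ?delta_range.
split=> [l l_range|]; first by rewrite Y_delta ?Y_y.
have sum_Y : \sum_(1 <= l < m.+1) (Yval md N m delta alpha c h A lam l %% (md 0%N)%:Z)%Z
             = \sum_(1 <= l < m.+1) delta l.
  by apply: eq_big_nat => l; rewrite ltnS; apply: Y_delta.
rewrite /output sum_Y big_nat_recr //= Hdeltam modzDmr addrC subrK.
by rewrite modz_small // ltz_nat Hs.
Qed.
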